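(* Let $k\ge 2$ and $n\ge 1$ be integers and let $1\le M\le kn-1$. Then the probability of selecting an item of highest rank (rank $n$) using the strategy $\mathcal{S}^+(n,k;M)$ is \[ P_{n,k}(\mathcal{S}^+(n,k;M))=\sum_{j=1}^{n-1}\sum_{l=1}^k \frac{\binom Ml(k)_l\,(k(j-1))_{M-l}}{(kn)_M}\cdot\frac 1{n-j}. \]
   Context: Fix integers $k\ge2$, $n\ge1$. There are $kn$ items, $k$ items at each of the ranks $1,2,\dots,n$ (rank $n$ is highest). The items are revealed one at a time in a uniformly random order, i.e. the sequence of ranks is a uniformly random permutation of the multiset $\{1^k,2^k,\dots,n^k\}$; $P_{n,k}$ denotes this uniform probability. For $M\in\{1,\dots,kn-1\}$, the strategy $\mathcal{S}^+(n,k;M)$ lets the first $M$ items pass and then selects the first later-arriving item whose rank is strictly greater than the highest rank among the first $M$ items (if such an item exists; otherwise nothing is selected). $P_{n,k}(\mathcal{S}^+(n,k;M))$ denotes the probability that this strategy selects an item of rank $n$. Notation: $(b)_a=b(b-1)\cdots(b-a+1)$ is the falling factorial for nonnegative integers $a,b$, with $(b)_0=1$ (so $(b)_a=0$ if $a>b$). *)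

From mathcomp Require Import all_boot all_order all_algebra.
Set Implicit Arguments. Unset Strict Implicit. Unset Printing Implicit Defensive.
Import GRing.Theory Num.Theory.

(* A rank sequence of length k*n: position i (0-based) carries the item of
   rank (s i) + 1, so rank values 1..n are encoded as 'I_n = {0..n-1};
   the highest rank n is encoded as n.-1.  Strict comparisons of ranks are
   unaffected by this shift. *)
Definition rank_seq (n k : nat) := {ffun 'I_(k * n) -> 'I_n}.

(* The possible orderings of the multiset {1^k, ..., n^k}: each rank occurs
   exactly k times.  The uniform probability P_{n,k} is the counting measure
   on this set, normalized. *)
Definition arrangements (n k : nat) : {set rank_seq n k} :=
  [set s : rank_seq n k | [forall r : 'I_n, #|[set i | s i == r]| == k]].

Definition max_first (n k M : nat) (s : rank_seq n k) : nat :=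
  \max_(i < k * n | i < M) (s i : nat).

Definition splus_success (n k M : nat) (s : rank_seq n k) : bool :=
  [exists i : 'I_(k * n),
     [&& M <= i, max_first M s < s i, (s i : nat) == n.-1 &
         [forall j : 'I_(k * n), ((M <= j) && (j < i)) ==> ((s j : nat) <= max_first M s)]]].

Definition P_splus (n k M : nat) : rat :=
  (#|[set s in arrangements n k | splus_success M s]|%:R / #|arrangements n k|%:R)%R.

From mathcomp Require Import all_boot all_order all_algebra perm.
From mathcomp Require Import zify ring.
Import GRing.Theory Num.Theory.
Set Implicit Arguments. Unset Strict Implicit. Unset Printing Implicit Defensive.

(* Let j be the highest rank among the first M items.  An exchange of positions
   shows that, given that the first t items have rank at most j, so has the next
   one with probability (kj - t)/(kn - t); hence j is the exact maximum with
   probability ((kj)_M - (k(j-1))_M)/(kn)_M, which Vandermonde's identity for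
   falling factorials expands into the inner sum.  If j < n, the strategy selects
   an item of one of the n - j ranks above j, and transposing two such ranks shows
   that all of them are equally likely: rank n is selected with conditional
   probability 1/(n - j). *)

Lemma card_set_sum (T : finType) (X : {set T}) (P : pred T) :
  #|[set x in X | P x]| = \sum_(x in X) P x.
Proof.
rewrite -sum1_card (eq_bigl (fun x => (x \in X) && P x)) => [|x]; last by rewrite inE.
by rewrite big_mkcondr; apply: eq_bigr => x _; case: (P x).
Qed.

Lemma double_count (T U : finType) (X : {set T}) (Y : {set U}) (R : T -> U -> bool) :
  \sum_(x in X) #|[set y in Y | R x y]| = \sum_(y in Y) #|[set x in X | R x y]|.
Proof.
under eq_bigr do rewrite card_set_sum.
by rewrite exchange_big; apply: eq_bigr => y _; rewrite card_set_sum.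
Qed.

Lemma card_rel_fibers (T I : finType) (X : {set T}) (R : T -> I -> bool) :
  (forall x, x \in X -> exists i, R x i) ->
  (forall x i j, x \in X -> R x i -> R x j -> i = j) ->
  #|X| = \sum_i #|[set x in X | R x i]|.
Proof.
move=> R_ex R_uniq; rewrite (eq_bigl (fun i => i \in [set: I])) => [|i]; last by rewrite inE.
rewrite -double_count -sum1_card.
apply: eq_bigr => x Xx; have [i Rxi] := R_ex x Xx.
rewrite -(cards1 i); apply: eq_card => j; rewrite !inE.
by apply/eqP/idP => [->//|Rxj]; apply: R_uniq Rxj Rxi.
Qed.

Lemma card_ord_lt N p (le_pN : p <= N) : #|[set i : 'I_N | i < p]| = p.
Proof.
have widen_inj : injective (widen_ord le_pN) by move=> i j [] /val_inj.
rewrite -[RHS]card_ord -(card_imset _ widen_inj).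
apply: eq_card => i; rewrite inE.
apply/idP/imsetP => [lt_ip|[j _ ->]]; last exact: (ltn_ord j).
by exists (Ordinal lt_ip) => //; apply: val_inj.
Qed.

Lemma card_ord_ge N p (le_pN : p <= N) : #|[set i : 'I_N | p <= i]| = N - p.
Proof.
rewrite -[N in RHS]card_ord -(cardsC [set i : 'I_N | i < p]) card_ord_lt // addKn.
by apply: eq_card => i; rewrite !inE -leqNgt.
Qed.

Lemma ffact_Vandermonde a b M :
  \sum_(l < M.+1) 'C(M, l) * a ^_ l * b ^_ (M - l) = (a + b) ^_ M.
Proof.
rewrite -bin_ffact -binomial.Vandermonde big_distrl /=; apply: eq_bigr => l _.
rewrite -!bin_ffact -(bin_fact (ltnSE (ltn_ord l))); ring.
Qed.

Lemma sum_ffact_Vandermonde1 a b M :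
  \sum_(1 <= l < a.+1) 'C(M, l) * a ^_ l * b ^_ (M - l) = (a + b) ^_ M - b ^_ M.
Proof.
pose F l := 'C(M, l) * a ^_ l * b ^_ (M - l).
have ->: (a + b) ^_ M = \sum_(0 <= l < a.+1) F l.
  rewrite -ffact_Vandermonde big_mkord.
  have le_M : M.+1 <= a + M.+1 by rewrite leq_addl.
  have le_a : a.+1 <= a + M.+1 by rewrite addnS ltnS leq_addr.
  rewrite (big_ord_widen _ F le_M) (big_ord_widen _ F le_a) big_mkcond [RHS]big_mkcond /=.
  have F0 l : (M < l) || (a < l) -> F l = 0.
    by rewrite /F; case/orP => [/bin_small|/ffact_small] ->; rewrite ?muln0 ?mul0n.
  apply: eq_bigr => l _; rewrite !ltnS.
  by case: leqP => lM; case: leqP => la //; rewrite F0 ?lM ?la ?orbT.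
by rewrite [in RHS]big_ltn // {1}/F bin0 ffactn0 subn0 !mul1n addKn.
Qed.

Section Arrangements.

Variables n k : nat.
Local Notation N := (k * n).
Local Notation arr := (arrangements n k).
Implicit Types (s : rank_seq n k) (m t : nat).

Definition permute_pos (p : {perm 'I_N}) s : rank_seq n k := [ffun i => s (p i)].
Definition permute_rank (q : {perm 'I_n}) s : rank_seq n k := [ffun i => q (s i)].

Lemma card_rank_eq s r : s \in arr -> #|[set i | s i == r]| = k.
Proof. by rewrite inE => /forallP /(_ r) /eqP. Qed.

Lemma permute_pos_arr p s : (permute_pos p s \in arr) = (s \in arr).
Proof.
rewrite !inE; apply: eq_forallb => r.
rewrite -[#|[set i | s i == r]|](card_preimset _ (@perm_inj _ p)).
by congr (_ == k); apply: eq_card => i; rewrite !inE ffunE.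
Qed.

Lemma permute_rank_arr q s : s \in arr -> permute_rank q s \in arr.
Proof.
move=> arr_s; rewrite inE; apply/forallP => r; apply/eqP.
apply: etrans (card_rank_eq (q^-1 r)%g arr_s); apply: eq_card => i.
by rewrite !inE ffunE -{1}(permKV q r) (inj_eq perm_inj).
Qed.

Lemma card_rank_lt s m : s \in arr -> m <= n -> #|[set i | s i < m]| = k * m.
Proof.
move=> arr_s le_mn.
rewrite (card_rel_fibers (R := fun i r => s i == r)); last 2 first.
- by move=> i _; exists (s i).
- by move=> i r r' _ /eqP <- /eqP.
transitivity (\sum_(r in [set r : 'I_n | r < m]) k); last first.
  by rewrite sum_nat_const card_ord_lt // mulnC.
rewrite [RHS]big_mkcond; apply: eq_bigr => r _; rewrite inE.
case: ltnP => [lt_rm|le_mr].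
- apply: etrans (card_rank_eq r arr_s); apply: eq_card => i.
  by rewrite !inE andbC; case: eqP => // ->.
- apply/eqP; rewrite cards_eq0; apply/eqP/setP => i; rewrite !inE.
  by case: eqP => [->|]; rewrite ?andbF // ltnNge le_mr.
Qed.

Lemma arrangements_nonempty : 0 < #|arr|.
Proof.
have k_gt0 (i : 'I_N) : 0 < k by case: k i => [[]|].
have rank_lt (i : 'I_N) : i %/ k < n by rewrite ltn_divLR ?(k_gt0 i) // [n * k]mulnC.
pose s0 : rank_seq n k := [ffun i => Ordinal (rank_lt i)].
apply/card_gt0P; exists s0; rewrite inE; apply/forallP => r; apply/eqP.
have pos_lt (j : 'I_k) : r * k + j < N.
  by have := ltn_ord r; have := ltn_ord j; nia.
have pos_inj : injective (fun j => Ordinal (pos_lt j)).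
  by move=> j j' [] /addnI /val_inj.
rewrite -[RHS]card_ord -(card_imset _ pos_inj); apply: eq_card => i.
rewrite inE ffunE; apply/eqP/imsetP => [/(congr1 val) /= i_r | [j _ ->]].
  exists (Ordinal (ltn_pmod i (k_gt0 i))) => //; apply: val_inj.
  by rewrite /= -i_r -divn_eq.
by apply: val_inj; rewrite /= divnMDl ?divn_small ?addn0 // (leq_trans _ (ltn_ord j)).
Qed.

Definition prefix_lt m t : {set rank_seq n k} :=
  [set s in arr | [forall i : 'I_N, (i < t) ==> (s i < m)]].

Lemma in_prefix_lt m t s :
  (s \in prefix_lt m t) = (s \in arr) && [forall i : 'I_N, (i < t) ==> (s i < m)].
Proof. by rewrite in_set. Qed.

Lemma card_rank_lt_from s m t : s \in prefix_lt m t -> m <= n -> t <= N ->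
  #|[set i : 'I_N | t <= i & s i < m]| = k * m - t.
Proof.
rewrite in_prefix_lt => /andP [arr_s /forallP prefix_s] le_mn le_tN.
rewrite -(card_rank_lt arr_s le_mn).
rewrite -[#|[set i | s i < m]|](cardsID [set i : 'I_N | i < t]) addnC.
have -> : [set i | s i < m] :&: [set i : 'I_N | i < t] = [set i : 'I_N | i < t].
  apply/setIidPr/subsetP => i; rewrite !inE => lt_it.
  exact: implyP (prefix_s i) lt_it.
by rewrite card_ord_lt // addnK; apply: eq_card => i; rewrite !inE -leqNgt andbC.
Qed.

Lemma card_prefix_lt_swap m t (i : 'I_N) (lt_tN : t < N) : t <= i ->
  #|[set s in prefix_lt m t | s i < m]| = #|prefix_lt m t.+1|.
Proof.
move=> le_ti; pose t0 := Ordinal lt_tN; pose p := tperm t0 i.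
have pK : involutive (permute_pos p).
  by move=> s; apply/ffunP => x; rewrite !ffunE tpermK.
have p_early (x : 'I_N) : x < t -> p x = x.
  move=> lt_xt; apply: tpermD; apply/eqP => /(congr1 val) /= x_eq.
  - by rewrite -x_eq ltnn in lt_xt.
  - by rewrite x_eq leqNgt lt_xt in le_ti.
rewrite -[RHS](card_preimset _ (can_inj pK)); apply: eq_card => s.
rewrite in_set in_prefix_lt -andbA [in RHS]in_set in_prefix_lt permute_pos_arr.
case: (s \in arr) => //=.
apply/andP/forallP => [[/forallP prefix_s lt_si] x | prefix_ps].
  rewrite ffunE ltnS leq_eqVlt; apply/implyP => /orP [/eqP x_t | lt_xt].
    have -> : x = t0 by exact: val_inj.
    by rewrite /p tpermL.
  by rewrite p_early //; apply: (implyP (prefix_s x)).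
split.
  apply/forallP => x; apply/implyP => lt_xt.
  by have := implyP (prefix_ps x) (ltnW lt_xt); rewrite ffunE p_early.
by have := implyP (prefix_ps t0) (ltnSn t); rewrite ffunE /p tpermL.
Qed.

(* Double count the pairs (s, i) with s in [prefix_lt m t], t <= i and s i < m. *)
Lemma card_prefix_lt_step m t : t < N -> m <= n ->
  #|prefix_lt m t.+1| * (N - t) = #|prefix_lt m t| * (k * m - t).
Proof.
move=> lt_tN le_mn.
have := double_count (prefix_lt m t) [set i : 'I_N | t <= i] (fun s i => s i < m).
rewrite (eq_bigr (fun=> k * m - t)) => [|s Ls]; last first.
  rewrite -(card_rank_lt_from Ls le_mn (ltnW lt_tN)).
  by apply: eq_card => i; rewrite !inE.
rewrite [RHS](eq_bigr (fun=> #|prefix_lt m t.+1|)) => [|i]; last first.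
  by rewrite inE; exact: card_prefix_lt_swap.
by rewrite !sum_nat_const card_ord_ge 1?ltnW // => ->; rewrite mulnC.
Qed.

Lemma card_prefix_lt m t : t <= N -> m <= n ->
  #|prefix_lt m t| * N ^_ t = #|arr| * (k * m) ^_ t.
Proof.
move=> le_tN le_mn; elim: t le_tN => [_|t IH lt_tN].
  rewrite !ffactn0 !muln1; apply: eq_card => s; rewrite in_prefix_lt.
  by case: (s \in arr) => //=; apply/forallP.
by rewrite !ffactnSr mulnA mulnAC card_prefix_lt_step // mulnAC IH 1?ltnW // mulnA.
Qed.

Section FirstItems.

Variable M : nat.
Hypotheses (M_gt0 : 0 < M) (lt_MN : M < N).

Lemma max_first_ub s (i : 'I_N) : i < M -> s i <= max_first M s.
Proof. by move=> lt_iM; apply: (@leq_bigmax_cond _ (fun i : 'I_N => i < M)). Qed.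

Lemma prefix_lt_max_first c s :
  (s \in prefix_lt c M) = (s \in arr) && (max_first M s < c).
Proof.
rewrite in_prefix_lt; congr andb; case: c => [|c].
  rewrite ltn0; apply/negbTE/forallPn.
  by exists (Ordinal (leq_ltn_trans (leq0n M) lt_MN)); rewrite /= M_gt0.
rewrite ltnS; apply/forallP/bigmax_leqP => [prefix_s i lt_iM | max_s i].
  exact: implyP (prefix_s i) lt_iM.
by apply/implyP => lt_iM; rewrite ltnS max_s.
Qed.

Definition prefix_max m : {set rank_seq n k} := [set s in arr | max_first M s == m].

Lemma card_prefix_max m : #|prefix_max m| + #|prefix_lt m M| = #|prefix_lt m.+1 M|.
Proof.
rewrite -(cardsID (prefix_lt m M) (prefix_lt m.+1 M)) addnC.
congr (_ + _); apply: eq_card => s.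
  rewrite in_setI !prefix_lt_max_first; case: (s \in arr) => //=.
  by rewrite ltnS; case: ltngtP.
rewrite in_setD !prefix_lt_max_first in_set; case: (s \in arr) => //=.
by rewrite ltnS; case: ltngtP.
Qed.

(* [splus_success M s] is [selects n.-1 s]. *)
Definition selects r s : bool :=
  [exists i : 'I_N,
     [&& M <= i, max_first M s < s i, (s i : nat) == r &
         [forall j : 'I_N, (M <= j < i) ==> (s j <= max_first M s)]]].

Lemma selects_uniq s r r' : selects r s -> selects r' s -> r = r'.
Proof.
case/existsP => i /and4P [Mi above_i /eqP <- /forallP before_i].
case/existsP => i' /and4P [Mi' above_i' /eqP <- /forallP before_i'].
case: (ltngtP i i') => [lt_ii' | lt_i'i | /val_inj -> //].
  by have := implyP (before_i' i) (introT andP (conj Mi lt_ii')); rewrite leqNgt above_i.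
by have := implyP (before_i i') (introT andP (conj Mi' lt_i'i)); rewrite leqNgt above_i'.
Qed.

Lemma selects_exists s : 0 < k -> s \in arr -> max_first M s < n.-1 ->
  exists r : 'I_n, selects r s.
Proof.
move=> k_gt0 arr_s lt_max_top.
have lt_top_n : n.-1 < n by lia.
have : 0 < #|[set i | s i == Ordinal lt_top_n]| by rewrite (card_rank_eq _ arr_s).
case/card_gt0P => i0; rewrite inE => /eqP s_i0.
pose above (i : 'I_N) := (M <= i) && (max_first M s < s i).
have above_i0 : above i0.
  rewrite /above s_i0 lt_max_top andbT leqNgt; apply/negP => /(max_first_ub s).
  by rewrite s_i0 leqNgt lt_max_top.
case: (arg_minnP (fun i : 'I_N => i : nat) above_i0) => i /andP [Mi above_i] first_i.
exists (s i); apply/existsP; exists i; rewrite Mi above_i eqxx /=.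
apply/forallP => j; apply/implyP => /andP [Mj lt_ji]; rewrite leqNgt; apply/negP => above_j.
by have := first_i j (introT andP (conj Mj above_j)); rewrite leqNgt lt_ji.
Qed.

Lemma max_first_permute_rank (a b : 'I_n) s :
  max_first M s < a -> max_first M s < b ->
  max_first M (permute_rank (tperm a b) s) = max_first M s.
Proof.
move=> lt_max_a lt_max_b; apply: eq_bigr => i lt_iM; rewrite ffunE tpermD //.
  by apply: contraTneq lt_max_a => ->; rewrite -leqNgt max_first_ub.
by apply: contraTneq lt_max_b => ->; rewrite -leqNgt max_first_ub.
Qed.

Lemma selects_permute_rank m (a b : 'I_n) s : m < a -> m < b ->
  s \in prefix_max m -> selects a s ->
  (permute_rank (tperm a b) s \in prefix_max m) && selects b (permute_rank (tperm a b) s).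
Proof.
move=> lt_ma lt_mb; rewrite inE => /andP [arr_s /eqP max_s].
rewrite -max_s in lt_ma lt_mb; pose s' := permute_rank (tperm a b) s.
have max_s' : max_first M s' = max_first M s by apply: max_first_permute_rank.
case/existsP => i /and4P [Mi above_i /eqP s_i /forallP before_i].
rewrite inE permute_rank_arr // max_s' max_s eqxx /=.
have s'_i : s' i = b by rewrite ffunE (_ : s i = a) ?tpermL //; apply: val_inj.
apply/existsP; exists i; rewrite max_s' Mi s'_i lt_mb eqxx /=.
apply/forallP => j; apply/implyP => Mji; have le_j := implyP (before_i j) Mji.
rewrite ffunE tpermD //; apply: contraTneq le_j => <-; rewrite -ltnNge //.
Qed.

(* Transposing two ranks above the prefix maximum fixes the stopping position. *)
Lemma card_selects_eq m (a b : 'I_n) : m < a -> m < b ->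
  #|[set s in prefix_max m | selects a s]| = #|[set s in prefix_max m | selects b s]|.
Proof.
move=> lt_ma lt_mb; pose f := permute_rank (tperm a b).
have fK : involutive f by move=> s; apply/ffunP => i; rewrite !ffunE tpermK.
rewrite -[RHS](card_preimset _ (can_inj fK)); apply: eq_card => s.
rewrite [s \in _]in_set [RHS]in_set [f s \in _]in_set; apply/andP/andP => -[Ps sel].
  by apply/andP; apply: selects_permute_rank.
by have := selects_permute_rank lt_mb lt_ma Ps sel; rewrite tpermC -/f fK => /andP.
Qed.

Lemma card_selects_le m r : r <= m -> #|[set s in prefix_max m | selects r s]| = 0.
Proof.
move=> le_rm; apply: eq_card0 => s; rewrite [s \in _]in_set in_set.
apply/negbTE/negP => /andP [/andP [_ /eqP max_s]].
case/existsP => i /and4P [_ + /eqP s_i _].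
by rewrite s_i max_s ltnNge le_rm.
Qed.

Lemma card_prefix_max_selects m : 0 < k -> m < n.-1 ->
  #|prefix_max m| = (n.-1 - m) * #|[set s in prefix_max m | selects n.-1 s]|.
Proof.
move=> k_gt0 lt_m_top; have lt_top_n : n.-1 < n by lia.
rewrite (card_rel_fibers (R := fun s (r : 'I_n) => selects r s)); last 2 first.
- move=> s; rewrite in_set => /andP [arr_s /eqP max_s].
  by apply: selects_exists; rewrite ?max_s.
- by move=> s r r' _ sel_r sel_r'; apply: val_inj; apply: selects_uniq sel_r sel_r'.
transitivity (\sum_(r in [set r : 'I_n | m < r])
                #|[set s in prefix_max m | selects (Ordinal lt_top_n) s]|).
  rewrite [RHS]big_mkcond; apply: eq_bigr => r _; rewrite inE.
  case: ltnP => [lt_mr | le_rm]; first exact: card_selects_eq.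
  exact: card_selects_le.
by rewrite sum_nat_const card_ord_ge; [congr (_ * _)%N; lia | lia].
Qed.

Lemma card_success : 0 < n ->
  #|[set s in arr | splus_success M s]| =
  \sum_(m < n) #|[set s in prefix_max m | selects n.-1 s]|.
Proof.
move=> n_gt0.
rewrite (card_rel_fibers (R := fun s (m : 'I_n) => max_first M s == m)); last 2 first.
- move=> s _; have lt_max_n : max_first M s < n.
    apply: (@leq_ltn_trans n.-1); last by rewrite ltn_predL.
    by apply/bigmax_leqP => i _; rewrite -ltnS prednK.
  by exists (Ordinal lt_max_n).
- by move=> s m m' _ /eqP max_m /eqP max_m'; apply: val_inj; rewrite /= -max_m -max_m'.
apply: eq_bigr => m _; apply: eq_card => s.
rewrite [s \in _]in_set [RHS]in_set [s \in prefix_max m]in_set [s \in _]in_set.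
by case: (s \in arr) => //=; rewrite andbC.
Qed.

Lemma card_success_prefix_max m : 0 < k -> m < n.-1 ->
  #|[set s in prefix_max m | selects n.-1 s]| * (n.-1 - m) * N ^_ M =
  #|arr| * ((k * m.+1) ^_ M - (k * m) ^_ M).
Proof.
move=> k_gt0 lt_m_top.
rewrite [_ * (n.-1 - m)]mulnC -card_prefix_max_selects //.
have -> : #|prefix_max m| = #|prefix_lt m.+1 M| - #|prefix_lt m M|.
  by rewrite -(card_prefix_max m) addnK.
by rewrite mulnBl !card_prefix_lt ?mulnBr ?(ltnW lt_MN) //; lia.
Qed.

End FirstItems.

End Arrangements.

Local Open Scope ring_scope.

Theorem proposition2 (n k M : nat) (hk : (2 <= k)%N) (hn : (1 <= n)%N)
  (hM1 : (1 <= M)%N) (hM2 : (M <= k * n - 1)%N) :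
  P_splus n k M =
  \sum_(1 <= j < n) \sum_(1 <= l < k.+1)
     (('C(M, l) * k ^_ l * (k * (j - 1)) ^_ (M - l))%:R / ((k * n) ^_ M)%:R)
       * (1 / (n - j)%:R).
Proof.
have k_gt0 : (0 < k)%N by lia.
have lt_MN : (M < k * n)%N by lia.
case: n hn hM2 lt_MN => // n _ _ lt_MN.
rewrite /P_splus card_success // big_ord_recr /= card_selects_le // addn0.
rewrite big_add1 big_mkord natr_sum mulr_suml; apply: eq_bigr => m _.
rewrite !subSS subn0 -!mulr_suml -natr_sum sum_ffact_Vandermonde1 -mulnS.
have arr_neq0 : #|arrangements n.+1 k|%:R != 0 :> rat.
  by rewrite pnatr_eq0 -lt0n arrangements_nonempty.
have ffact_neq0 : ((k * n.+1) ^_ M)%:R != 0 :> rat.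
  by rewrite pnatr_eq0 -lt0n ffact_gt0 ltnW.
have gap_neq0 : (n - m)%:R != 0 :> rat by rewrite pnatr_eq0 subn_eq0 -ltnNge.
apply/eqP; rewrite mulf_div mulr1 eqr_div ?mulf_neq0 // -!natrM eqr_nat; apply/eqP.
have := card_success_prefix_max hM1 lt_MN k_gt0 (ltn_ord m); rewrite /=; nia.
Qed.
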